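(* Let $\mathsf{R}=(R,\iota_R,\nabla_{R,d})$ be a quasicoherent sheaf of rings on $\mathsf{Def}$, and let $\psi_R\colon R\to R$ be its Adams operation. Then: (1) $\psi_R\iota_R=\iota_R\psi_{\mathcal{O}}$; (2) for every $d\ge0$, $\nabla_{R,d}\circ\psi_R=(\psi_{\mathcal{O}_d}\otimes\psi_R)\circ\nabla_{R,d}$ as maps $R\to \mathcal{O}_d\otimes_{s_d,\mathcal{O},\iota_R}R$; (3) if $\mathsf{R}$ satisfies the Frobenius congruence, then $\psi_R(x)\equiv x^{p^h}\bmod \mathfrak{m}R$ for all $x\in R$.
   Context: Fix a prime $p$, a perfect field $\kappa$ of characteristic $p$, and a formal group $\Gamma/\kappa$ of height $1\le h<\infty$. Let $\mathcal{O}$ be the Lubin–Tate ring (maximal ideal $\mathfrak{m}$, residue field $\kappa$) and, for $d\ge0$, $\mathcal{O}_d$ the Strickland ring classifying subgroups of rank $p^d$ of the universal deformation (complete local, maximal ideal $\mathfrak{m}_d$, residue field $\kappa$, $\mathcal{O}_0=\mathcal{O}$). These come with ring maps $s_d,t_d\colon\mathcal{O}\to\mathcal{O}_d$ (source and target), $s_d$ making $\mathcal{O}_d$ a finitely generated free $\mathcal{O}$-module, and composition maps $\nabla_{d,e}\colon\mathcal{O}_{d+e}\to\mathcal{O}_d\otimes_{s_d,\mathcal{O},t_e}\mathcal{O}_e$, forming the graded category scheme representing deformations of $\Gamma$ and their height-$d$ morphisms. There are surjections $\nu_d\colon\mathcal{O}_d\to\mathcal{O}/p$ (representing height-$d$ Frobenius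 morphisms) with $\nu_ds_d$ the quotient map, $\nu_dt_d$ the $p^d$-th power map, and $\mathcal{O}_d\xrightarrow{\nu_d}\mathcal{O}/p\to\kappa$ the quotient map. There are ring automorphisms $\psi_{\mathcal{O}_d}$ of $\mathcal{O}_d$ ($\psi_{\mathcal{O}}=\psi_{\mathcal{O}_0}$), compatible with $s_d,t_d$ (i.e. $\psi_{\mathcal{O}_d}s_d=s_d\psi_{\mathcal{O}}$, $\psi_{\mathcal{O}_d}t_d=t_d\psi_{\mathcal{O}}$), representing the autoequivalence of deformations induced by the isomorphism $\sigma\colon(\phi^h)^*\Gamma\to\Gamma$ with $[p]=\sigma\operatorname{Fr}^h$ on $\Gamma$, and a ring map $q\colon\mathcal{O}_h\to\mathcal{O}$ representing the $p$-th power isogeny, with $qs_h=\mathrm{id}$, $qt_h=\psi_{\mathcal{O}}$, $(q\otimes\mathrm{id})\nabla_{h,d}=(\psi_{\mathcal{O}_d}\otimes q)\nabla_{d,h}$ as maps $\mathcal{O}_{d+h}\to\mathcal{O}_d$, and $\psi_{\mathcal{O}_d}(x)\equiv x^{p^h}\bmod\mathfrak{m}_d$. A quasicoherent sheaf of rings on $\mathsf{Def}$ is a triple $(R,\iota_R,\nabla_{R,d})$: a commutative ring $R$, a ring map $\iota_R\colon\mathcal{O}\to R$, and ring maps $\nabla_{R,d}\colon R\to\mathcal{O}_d\otimes_{s_d,\mathcal{O},\iota_R}R$ ($d\ge0$) such that $(\mathrm{id}\otimes\nabla_{R,e})\nabla_{R,d}=(\nabla_{d,e}\otimes\mathrm{id})\nabla_{R,d+e}$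 and $\nabla_{R,d}\iota_R=(\mathrm{id}\otimes\iota_R)t_d$. It satisfies the Frobenius congruence if for all $d$ the composite $(\nu_d\otimes\mathrm{id})\nabla_{R,d}\colon R\to\mathcal{O}/p\otimes_{\mathcal{O}}R=R/p$ equals $x\mapsto x^{p^d}\bmod p$. Its Adams operation is $\psi_R=(q\otimes\mathrm{id})\circ\nabla_{R,h}\colon R\to\mathcal{O}_h\otimes_{s_h,\mathcal{O},\iota_R}R\to\mathcal{O}\otimes_{\mathcal{O}}R=R$. *)

From HB Require Import structures.
From mathcomp Require Import all_boot all_order all_algebra.
Set Implicit Arguments. Unset Strict Implicit. Unset Printing Implicit Defensive.
Import GRing.Theory.
Local Open Scope ring_scope.

(* [agrees i j u v w] : the map w out of (a tensor product with structure maps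
   i, j) restricts to u along i and to v along j; i.e. w = "u (x) v". *)
Definition agrees (B C T D : Type) (i : B -> T) (j : C -> T)
  (u : B -> D) (v : C -> D) (w : T -> D) : Prop :=
  (forall b, w (i b) = u b) /\ (forall c, w (j c) = v c).

(* T together with i : B -> T, j : C -> T is the tensor product
   B (x)_{f,A,g} C of commutative rings, i.e. the pushout of f and g in the
   category of commutative rings (universal property). *)
Definition is_tensor (A B C T : comPzRingType)
  (f : {rmorphism A -> B}) (g : {rmorphism A -> C})
  (i : {rmorphism B -> T}) (j : {rmorphism C -> T}) : Prop :=
  (forall a, i (f a) = j (g a)) /\
  forall (D : comPzRingType) (u : {rmorphism B -> D}) (v : {rmorphism C -> D}),
    (forall a, u (f a) = v (g a)) ->
    (exists w : {rmorphism T -> D}, agrees i j u v w) /\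
    (forall w1 w2 : {rmorphism T -> D},
        agrees i j u v w1 -> agrees i j u v w2 -> forall t, w1 t = w2 t).

(* local ring with residue map rho onto the field k (maximal ideal = ker rho) *)
Definition is_local (A : comPzRingType) (k : fieldType) (rho : {rmorphism A -> k})
  : Prop :=
  (forall y, exists x, rho x = y) /\
  (forall x, rho x != 0 -> exists y, x * y = 1).

Definition is_finite_free (A B : comPzRingType) (s : {rmorphism A -> B}) : Prop :=
  exists (n : nat) (b : 'I_n -> B),
    (forall x, exists c : 'I_n -> A, x = \sum_(i < n) s (c i) * b i) /\
    (forall c c' : 'I_n -> A,
        \sum_(i < n) s (c i) * b i = \sum_(i < n) s (c' i) * b i ->
        forall i, c i = c' i).

Definition is_quot_p (A Q : comPzRingType) (pi : {rmorphism A -> Q}) (p : nat)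
  : Prop :=
  (forall y, exists x, pi x = y) /\
  (forall x, pi x = 0 <-> exists y, x = p%:R * y).

Definition tr (F : nat -> comPzRingType) (m n : nat) (e : m = n) (x : F m) : F n :=
  eq_rect m (fun k => F k : Type) x n e.

From HB Require Import structures.
From mathcomp Require Import all_boot all_order all_algebra.
From mathcomp Require Import generic_quotient boolp ring.
Import GRing.Theory.
Set Implicit Arguments. Unset Strict Implicit. Unset Printing Implicit Defensive.
Local Open Scope ring_scope.
Local Open Scope quotient_scope.

(* psi_R = (q (x) id) nabla_{R,h}.  Part (1) is immediate from nabla_{R,h} iota = t_h and
   q t_h = psi_O.  For (2), coassociativity of nabla_R expresses both
   nabla_{R,d} psi_R and (psi_{O_d} (x) psi_R) nabla_{R,d} as nabla_{R,h+d} followed by a map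
   out of O_{h+d} (x)_O R; these two maps agree because q intertwines nabla_{h,d} and
   nabla_{d,h}.  For (3), compare the maps (q (x) id) and (nu_h (x) id) from O_h (x)_O R to
   R/p: they agree on R, and on O_h they differ by elements of m, because a retraction q of
   s_h between local rings commutes with the residue maps.  So they agree modulo mR, and the
   Frobenius congruence identifies the second one with x |-> x^(p^h). *)

Record ideal (A : comPzRingType) := Ideal {
  in_ideal :> A -> Prop;
  ideal0 : in_ideal 0;
  idealB : forall x y, in_ideal x -> in_ideal y -> in_ideal (x - y);
  idealM : forall a x, in_ideal x -> in_ideal (a * x) }.

(* {ideal_quot} only carries a ring structure for proper ideals of nonzero rings; here the
   ring may be zero and the ideal may be everything. *)
Section CommutativeQuotient.
Variables (A : comPzRingType) (I : ideal A).

Definition ideal_mem : {pred A} := fun x => `[< I x >].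

Lemma ideal_memP x : reflect (I x) (x \in ideal_mem).
Proof. exact: asboolP. Qed.

Lemma ideal_mem_zmod_closed : zmod_closed ideal_mem.
Proof.
split=> [|x y /ideal_memP Ix /ideal_memP Iy]; apply/ideal_memP; last exact: idealB.
exact: ideal0.
Qed.

HB.instance Definition _ :=
  GRing.isZmodClosed.Build A ideal_mem ideal_mem_zmod_closed.

Definition quot := {ideal_quot ideal_mem}.
HB.instance Definition _ := ZmodQuotient.on quot.

Definition quot_one : quot := lift_cst quot 1.
Definition quot_mul := lift_op2 quot *%R.
Canonical pi_quot_one_morph := PiConst quot_one.

Lemma pi_quot_mul : {morph \pi_quot : x y / x * y >-> quot_mul x y}.
Proof.
move=> x y; unlock quot_mul; apply/eqP; rewrite piE; apply/ideal_memP.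
set x' := repr _; set y' := repr _.
have /ideal_memP Ix : x - x' \in ideal_mem by rewrite Quotient.idealrBE reprK.
have /ideal_memP Iy : y' - y \in ideal_mem by rewrite Quotient.idealrBE reprK.
have -> : x * y - x' * y' = y * (x - x') - x' * (y' - y) by ring.
by apply: idealB; apply: idealM.
Qed.
Canonical pi_quot_mul_morph := PiMorph2 pi_quot_mul.

Lemma quot_mulA : associative quot_mul.
Proof. by move=> x y z; rewrite -[x]reprK -[y]reprK -[z]reprK !piE mulrA. Qed.
Lemma quot_mulC : commutative quot_mul.
Proof. by move=> x y; rewrite -[x]reprK -[y]reprK !piE mulrC. Qed.
Lemma quot_mul1 : left_id quot_one quot_mul.
Proof. by move=> x; rewrite -[x]reprK !piE mul1r. Qed.
Lemma quot_mulDl : left_distributive quot_mul +%R.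
Proof. by move=> x y z; rewrite -[x]reprK -[y]reprK -[z]reprK !piE mulrDl. Qed.

HB.instance Definition _ :=
  GRing.Zmodule_isComPzRing.Build quot quot_mulA quot_mulC quot_mul1 quot_mulDl.

Definition quot_pi (x : A) : quot := \pi x.

Lemma quot_pi_is_monoid_morphism : monoid_morphism quot_pi.
Proof. by split=> [|x y]; rewrite /quot_pi piE. Qed.
HB.instance Definition _ := GRing.isZmodMorphism.Build A quot quot_pi
  (@pi_is_zmod_morphism _ _ _ quot).
HB.instance Definition _ :=
  GRing.isMonoidMorphism.Build A quot quot_pi quot_pi_is_monoid_morphism.

Lemma quot_pi_eq0 x : quot_pi x = 0 <-> I x.
Proof.
rewrite -(rmorph0 quot_pi); split=> [/eqP|Ix]; last apply/eqP;
  rewrite piE Quotient.equivE subr0; exact/ideal_memP.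
Qed.
End CommutativeQuotient.

Section ExtendedIdeal.
Variables (A : Type) (R : comPzRingType) (f : A -> R) (S : A -> Prop).

Definition ext_ideal (x : R) : Prop :=
  exists n (a : 'I_n -> A) (r : 'I_n -> R),
    (forall i, S (a i)) /\ x = \sum_(i < n) f (a i) * r i.

Lemma ext_ideal0 : ext_ideal 0.
Proof.
exists 0%N, (fun i : 'I_0 => False_rect A (Bool.diff_false_true (ltn_ord i))).
by exists (fun _ => 0); split=> [[] //|]; rewrite big_ord0.
Qed.

Lemma ext_ideal_gen a r : S a -> ext_ideal (f a * r).
Proof.
by move=> Sa; exists 1%N, (fun _ => a), (fun _ => r); rewrite big_ord1.
Qed.

Lemma ext_idealN x : ext_ideal x -> ext_ideal (- x).
Proof.
move=> [n [a [r [Sa ->]]]]; exists n, a, (fun i => - r i); split=> //.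
by rewrite -sumrN; apply: eq_bigr => i _; rewrite mulrN.
Qed.

Lemma ext_idealD x y : ext_ideal x -> ext_ideal y -> ext_ideal (x + y).
Proof.
move=> [n [a [r [Sa ->]]]] [m [b [u [Sb ->]]]].
exists (n + m)%N, (fun i => match split i with inl j => a j | inr k => b k end),
  (fun i => match split i with inl j => r j | inr k => u k end); split.
  by move=> i; case: split.
rewrite big_split_ord; congr (_ + _); apply: eq_bigr => i _.
  by rewrite (unsplitK (inl i)).
by rewrite (unsplitK (inr i)).
Qed.

Lemma ext_idealB x y : ext_ideal x -> ext_ideal y -> ext_ideal (x - y).
Proof. by move=> Ix Iy; apply: ext_idealD => //; apply: ext_idealN. Qed.

Lemma ext_idealM a x : ext_ideal x -> ext_ideal (a * x).
Proof.
move=> [n [b [r [Sb ->]]]]; exists n, b, (fun i => a * r i); split=> //.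
by rewrite mulr_sumr; apply: eq_bigr => i _; rewrite mulrCA.
Qed.
End ExtendedIdeal.

Section TensorProduct.
Variables (A B C T : comPzRingType) (f : {rmorphism A -> B}) (g : {rmorphism A -> C}).
Variables (i : {rmorphism B -> T}) (j : {rmorphism C -> T}).
Hypothesis tensorT : is_tensor f g i j.

Lemma tensor_morph_exists (D : comPzRingType) (u : {rmorphism B -> D})
    (v : {rmorphism C -> D}) :
  (forall a, u (f a) = v (g a)) -> exists w : {rmorphism T -> D}, agrees i j u v w.
Proof. by move=> fg; have [] := tensorT.2 D u v fg. Qed.

Lemma tensor_morph_ext (D : comPzRingType) (w1 w2 : {rmorphism T -> D}) :
  (forall b, w1 (i b) = w2 (i b)) -> (forall c, w1 (j c) = w2 (j c)) -> w1 =1 w2.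
Proof.
move=> eq_i eq_j; have fg a : (w1 \o i) (f a) = (w1 \o j) (g a).
  by rewrite /= tensorT.1.
by apply: (tensorT.2 D _ _ fg).2; split=> //= b; rewrite eq_i.
Qed.
End TensorProduct.

Lemma residue_retraction (A B : comPzRingType) (k : fieldType)
    (rhoA : {rmorphism A -> k}) (rhoB : {rmorphism B -> k})
    (s : {rmorphism A -> B}) (q : {rmorphism B -> A}) :
  is_local rhoA -> is_local rhoB -> cancel s q -> (forall a, rhoB (s a) = rhoA a) ->
  forall b, rhoA (q b) = rhoB b.
Proof.
move=> [rhoA_surj _] [_ unitB] sK rho_s b.
have [a rho_a] := rhoA_surj (rhoA (q b)).
have rhoA_q : rhoA (q (b - s a)) = 0 by rewrite !rmorphB /= sK rho_a subrr.
have rhoB0 : rhoB (b - s a) = 0.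
  apply/eqP; apply: contraT => /unitB [c bc1].
  have := congr1 (rhoA \o q) bc1; rewrite /= !rmorphM /= rhoA_q mul0r !rmorph1.
  by move/eqP; rewrite eq_sym oner_eq0.
by move/eqP: rhoB0; rewrite rmorphB /= rho_s -rho_a subr_eq0 => /eqP.
Qed.

Lemma tensor_tr_ext (O R W : comPzRingType) (Od T : nat -> comPzRingType)
    (s : forall d, {rmorphism O -> Od d}) (iota : {rmorphism O -> R})
    (inlT : forall d, {rmorphism Od d -> T d}) (inrT : forall d, {rmorphism R -> T d})
    (tensorT : forall d, is_tensor (s d) iota (inlT d) (inrT d))
    (NR : forall d, R -> T d) (c : {rmorphism R -> W}) (m n : nat) (e : m = n)
    (Am : {rmorphism Od m -> W}) (An : {rmorphism Od n -> W})
    (Gm : {rmorphism T m -> W}) (Gn : {rmorphism T n -> W}) :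
  (forall y, Am y = An (tr e y)) ->
  agrees (inlT m) (inrT m) Am c Gm -> agrees (inlT n) (inrT n) An c Gn ->
  forall x, Gm (NR m x) = Gn (NR n x).
Proof.
case: n / e An Gn => An Gn Amn [Gm_l Gm_r] [Gn_l Gn_r] x.
by apply: (tensor_morph_ext (tensorT m)) => [b|r];
  [rewrite Gm_l Gn_l Amn | rewrite Gm_r Gn_r].
Qed.

Section AdamsOperation.
Variables (O : comPzRingType) (Od : nat -> comPzRingType)
  (s t : forall d, {rmorphism O -> Od d}).
Variables (M : nat -> nat -> comPzRingType)
  (mL : forall d e, {rmorphism Od d -> M d e}) (mR : forall d e, {rmorphism Od e -> M d e})
  (Nab : forall d e, {rmorphism Od (d + e)%N -> M d e}).
Hypotheses (hM : forall d e, is_tensor (s d) (t e) (mL d e) (mR d e))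
  (hNs : forall (d e : nat) x, Nab d e (s (d + e)%N x) = mR d e (s e x)).
Variables (psiO : {rmorphism O -> O}) (psi : forall d, {rmorphism Od d -> Od d}).
Hypothesis hpsi_s : forall d x, psi d (s d x) = s d (psiO x).
Variables (h : nat) (q : {rmorphism Od h -> O}).
Hypotheses (hq_s : forall x, q (s h x) = x) (hq_t : forall x, q (t h x) = psiO x).
Hypothesis hq_nab :
  forall d (F : {rmorphism M h d -> Od d}) (G : {rmorphism M d h -> Od d}),
  agrees (mL h d) (mR h d) (t d \o q) idfun F ->
  agrees (mL d h) (mR d h) (psi d) (s d \o q) G ->
  forall x : Od (d + h)%N, F (Nab h d (@tr Od _ _ (addnC d h) x)) = G (Nab d h x).
Variables (R : comPzRingType) (iota : {rmorphism O -> R}) (T : nat -> comPzRingType)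
  (inlT : forall d, {rmorphism Od d -> T d}) (inrT : forall d, {rmorphism R -> T d}).
Hypothesis hT : forall d, is_tensor (s d) iota (inlT d) (inrT d).
Variable NR : forall d, {rmorphism R -> T d}.
Hypothesis hNR_coassoc : forall (d e : nat) (W : comPzRingType)
  (a : {rmorphism Od d -> W}) (b : {rmorphism Od e -> W}) (c : {rmorphism R -> W})
  (u : {rmorphism T e -> W}) (F : {rmorphism T d -> W})
  (v : {rmorphism M d e -> W}) (G : {rmorphism T (d + e)%N -> W}),
  agrees (inlT e) (inrT e) b c u ->
  agrees (inlT d) (inrT d) a (u \o NR e) F ->
  agrees (mL d e) (mR d e) a b v ->
  agrees (inlT (d + e)%N) (inrT (d + e)%N) (v \o Nab d e) c G ->
  forall x, F (NR d x) = G (NR (d + e)%N x).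
Hypothesis hNR_iota : forall d x, NR d (iota x) = inlT d (t d x).
Variable Q : {rmorphism T h -> R}.
Hypothesis hQ : agrees (inlT h) (inrT h) (iota \o q) idfun Q.

Local Notation psiR x := (Q (NR h x)).

Lemma adams_iota x : psiR (iota x) = iota (psiO x).
Proof. by rewrite hNR_iota hQ.1 /= hq_t. Qed.

Lemma nablaR_adamsE d (F0 : {rmorphism M h d -> Od d})
    (GA : {rmorphism T (h + d)%N -> T d}) :
  agrees (mL h d) (mR h d) (t d \o q) idfun F0 ->
  agrees (inlT (h + d)%N) (inrT (h + d)%N) (inlT d \o F0 \o Nab h d) (inrT d) GA ->
  forall x, NR d (psiR x) = GA (NR (h + d)%N x).
Proof.
move=> [F0_l F0_r] GA_agrees x.
apply: (hNR_coassoc (a := inlT d \o t d \o q) (u := idfun) (F := NR d \o Q)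
  (v := inlT d \o F0) _ _ _ GA_agrees).
- by [].
- by split=> b /=; rewrite ?hQ.1 ?hQ.2 //= hNR_iota.
- by split=> b /=; rewrite ?F0_l ?F0_r.
Qed.

Lemma adams_tensor_nablaRE d (Phi : {rmorphism T d -> T d})
    (G0 : {rmorphism M d h -> Od d}) (GB : {rmorphism T (d + h)%N -> T d}) :
  agrees (inlT d) (inrT d) (inlT d \o psi d) (inrT d \o Q \o NR h) Phi ->
  agrees (mL d h) (mR d h) (psi d) (s d \o q) G0 ->
  agrees (inlT (d + h)%N) (inrT (d + h)%N) (inlT d \o G0 \o Nab d h) (inrT d) GB ->
  forall x, Phi (NR d x) = GB (NR (d + h)%N x).
Proof.
move=> Phi_agrees [G0_l G0_r] GB_agrees x.
apply: (hNR_coassoc (b := inrT d \o iota \o q) (u := inrT d \o Q) (v := inlT d \o G0)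
  _ Phi_agrees _ GB_agrees).
- by split=> b /=; rewrite ?hQ.1 ?hQ.2.
- by split=> b /=; rewrite ?G0_l ?G0_r //= (hT d).1.
Qed.

Lemma nablaR_adams d (Phi : {rmorphism T d -> T d}) :
  agrees (inlT d) (inrT d) (inlT d \o psi d) (inrT d \o Q \o NR h) Phi ->
  forall x, NR d (psiR x) = Phi (NR d x).
Proof.
move=> Phi_agrees x.
have [F0 F0_agrees] := tensor_morph_exists (hM h d) (u := t d \o q) (v := idfun)
  (fun a => congr1 (t d) (hq_s a)).
have [G0 G0_agrees] := tensor_morph_exists (hM d h) (u := psi d) (v := s d \o q)
  (fun a => etrans (hpsi_s d a) (congr1 (s d) (esym (hq_t a)))).
have [GA GA_agrees] : exists GA : {rmorphism T (h + d)%N -> T d},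
    agrees (inlT (h + d)%N) (inrT (h + d)%N) (inlT d \o F0 \o Nab h d) (inrT d) GA.
  apply: (tensor_morph_exists (hT _)) => a.
  by rewrite /= hNs F0_agrees.2 (hT d).1.
have [GB GB_agrees] : exists GB : {rmorphism T (d + h)%N -> T d},
    agrees (inlT (d + h)%N) (inrT (d + h)%N) (inlT d \o G0 \o Nab d h) (inrT d) GB.
  apply: (tensor_morph_exists (hT _)) => a.
  by rewrite /= hNs G0_agrees.2 /= hq_s (hT d).1.
rewrite (nablaR_adamsE F0_agrees GA_agrees).
rewrite (adams_tensor_nablaRE Phi_agrees G0_agrees GB_agrees).
apply/esym; apply: (tensor_tr_ext hT NR (e := addnC d h) _ GB_agrees GA_agrees) => y /=.
by rewrite (hq_nab F0_agrees G0_agrees).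
Qed.

Variables (p : nat) (kappa : fieldType) (rho : {rmorphism O -> kappa})
  (rhod : forall d, {rmorphism Od d -> kappa}).
Hypotheses (hchar : p \in [pchar kappa]) (hO : is_local rho)
  (hOd : forall d, is_local (rhod d)).
Variables (Op : comPzRingType) (piO : {rmorphism O -> Op}) (rhobar : {rmorphism Op -> kappa})
  (nu : forall d, {rmorphism Od d -> Op}).
Hypotheses (piO_surj : forall y, exists x, piO x = y)
  (hrhobar : forall x, rhobar (piO x) = rho x)
  (hnu_s : forall d x, nu d (s d x) = piO x)
  (hnu_res : forall d x, rhobar (nu d x) = rhod d x).

Lemma adams_frobenius (Rp : comPzRingType) (piR : {rmorphism R -> Rp})
    (iotabar : {rmorphism Op -> Rp}) :
  is_quot_p piR p -> (forall x, iotabar (piO x) = piR (iota x)) ->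
  (forall N : {rmorphism T h -> Rp}, agrees (inlT h) (inrT h) (iotabar \o nu h) piR N ->
     forall x, N (NR h x) = piR (x ^+ (p ^ h))) ->
  forall x, ext_ideal iota (fun a => rho a = 0) (psiR x - x ^+ (p ^ h)).
Proof.
move=> [piR_surj ker_piR] iotabar_piO frob x.
pose J z := exists2 m, ext_ideal iota (fun a => rho a = 0) m & z = piR m.
have J0 : J 0 by exists 0; [exact: ext_ideal0 | rewrite rmorph0].
have JB y z : J y -> J z -> J (y - z).
  move=> [m1 Im1 ->] [m2 Im2 ->].
  by exists (m1 - m2); [exact: ext_idealB | rewrite rmorphB].
have JM a y : J y -> J (a * y).
  move=> [m Im ->]; have [r <-] := piR_surj a.
  by exists (r * m); [exact: ext_idealM | rewrite rmorphM].
pose pi := quot_pi (Ideal J0 JB JM).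
have [N N_agrees] : exists N : {rmorphism T h -> Rp},
    agrees (inlT h) (inrT h) (iotabar \o nu h) piR N.
  by apply: (tensor_morph_exists (hT h)) => a /=; rewrite hnu_s iotabar_piO.
have rho_q b : rho (q b) = rhod h b.
  apply: (residue_retraction hO (hOd h) hq_s) => a.
  by rewrite -hnu_res hnu_s hrhobar.
have pi_eq : pi (piR (psiR x)) = pi (N (NR h x)).
  apply: (tensor_morph_ext (hT h) (w1 := pi \o piR \o Q) (w2 := pi \o N)) => [b|r] /=;
    last by rewrite hQ.2 N_agrees.2.
  rewrite hQ.1 N_agrees.1 /=; have [a nu_b] := piO_surj (nu h b).
  apply/eqP; rewrite -subr_eq0 -rmorphB -nu_b iotabar_piO -rmorphB; apply/eqP/quot_pi_eq0.
  exists (iota (q b - a) * 1); last by rewrite mulr1 !rmorphB.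
  apply: ext_ideal_gen.
  by rewrite rmorphB /= rho_q -hnu_res -nu_b hrhobar subrr.
move: pi_eq; rewrite (frob N N_agrees) => /eqP; rewrite -subr_eq0 -rmorphB.
move=> /eqP/quot_pi_eq0 [m Im piR_m].
have /ker_piR [y py] : piR (psiR x - x ^+ (p ^ h) - m) = 0.
  by rewrite !rmorphB /= -piR_m subrr.
have -> : psiR x - x ^+ (p ^ h) = m + iota p%:R * y.
  by rewrite rmorph_nat -py [m + _]addrC subrK.
apply: (ext_idealD Im); apply: ext_ideal_gen.
by rewrite rmorph_nat (pcharf0 hchar).
Qed.

End AdamsOperation.

Theorem proposition3p5
  (* prime, residue field, height *)
  (p : nat) (hp : prime p) (kappa : fieldType)
  (hchar : p \in [pchar kappa]) (hperf : forall y : kappa, exists z, z ^+ p = y)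
  (h : nat) (hh : (1 <= h)%N)
  (* Lubin--Tate ring *)
  (O : comPzRingType) (rho : {rmorphism O -> kappa}) (hO : is_local rho)
  (* Strickland rings, source and target *)
  (Od : nat -> comPzRingType) (rhod : forall d, {rmorphism Od d -> kappa})
  (hOd : forall d, is_local (rhod d))
  (s t : forall d, {rmorphism O -> Od d})
  (hfree : forall d, is_finite_free (s d))
  (* O_d (x)_{s_d,O,t_e} O_e and composition maps *)
  (M : nat -> nat -> comPzRingType)
  (mL : forall d e, {rmorphism Od d -> M d e})
  (mR : forall d e, {rmorphism Od e -> M d e})
  (hM : forall d e, is_tensor (s d) (t e) (mL d e) (mR d e))
  (Nab : forall d e, {rmorphism Od (d + e)%N -> M d e})
  (hNs : forall (d e : nat) x, Nab d e (s (d + e)%N x) = mR d e (s e x))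
  (hNt : forall (d e : nat) x, Nab d e (t (d + e)%N x) = mL d e (t d x))
  (* O/p and the Frobenius maps nu_d *)
  (Op : comPzRingType) (piO : {rmorphism O -> Op}) (hpiO : is_quot_p piO p)
  (rhobar : {rmorphism Op -> kappa}) (hrhobar : forall x, rhobar (piO x) = rho x)
  (nu : forall d, {rmorphism Od d -> Op})
  (hnu_surj : forall d y, exists x, nu d x = y)
  (hnu_s : forall d x, nu d (s d x) = piO x)
  (hnu_t : forall d x, nu d (t d x) = piO (x ^+ (p ^ d)%N))
  (hnu_res : forall d x, rhobar (nu d x) = rhod d x)
  (* the automorphisms psi *)
  (psiO : {rmorphism O -> O}) (hpsiO : bijective psiO)
  (hpsiO_cong : forall x, rho (psiO x - x ^+ (p ^ h)%N) = 0)
  (psi : forall d, {rmorphism Od d -> Od d}) (hpsi : forall d, bijective (psi d))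
  (hpsi_s : forall d x, psi d (s d x) = s d (psiO x))
  (hpsi_t : forall d x, psi d (t d x) = t d (psiO x))
  (hpsi_cong : forall d x, rhod d (psi d x - x ^+ (p ^ h)%N) = 0)
  (* the p-th power isogeny q *)
  (q : {rmorphism Od h -> O})
  (hq_s : forall x, q (s h x) = x)
  (hq_t : forall x, q (t h x) = psiO x)
  (hq_nab : forall d (F : {rmorphism M h d -> Od d}) (G : {rmorphism M d h -> Od d}),
      agrees (mL h d) (mR h d) (t d \o q) idfun F ->
      agrees (mL d h) (mR d h) (psi d) (s d \o q) G ->
      forall x : Od (d + h)%N, F (Nab h d (@tr Od _ _ (addnC d h) x)) = G (Nab d h x))
  (* a quasicoherent sheaf of rings (R, iota, nabla_R) *)
  (R : comPzRingType) (iota : {rmorphism O -> R})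
  (T : nat -> comPzRingType)
  (inlT : forall d, {rmorphism Od d -> T d}) (inrT : forall d, {rmorphism R -> T d})
  (hT : forall d, is_tensor (s d) iota (inlT d) (inrT d))
  (NR : forall d, {rmorphism R -> T d})
  (hNR_coassoc : forall (d e : nat) (W : comPzRingType)
      (a : {rmorphism Od d -> W}) (b : {rmorphism Od e -> W}) (c : {rmorphism R -> W})
      (u : {rmorphism T e -> W}) (F : {rmorphism T d -> W})
      (v : {rmorphism M d e -> W}) (G : {rmorphism T (d + e)%N -> W}),
      agrees (inlT e) (inrT e) b c u ->
      agrees (inlT d) (inrT d) a (u \o NR e) F ->
      agrees (mL d e) (mR d e) a b v ->
      agrees (inlT (d + e)%N) (inrT (d + e)%N) (v \o Nab d e) c G ->
      forall x, F (NR d x) = G (NR (d + e)%N x))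
  (hNR_iota : forall d x, NR d (iota x) = inlT d (t d x))
  (* the map q (x) id : O_h (x)_O R -> R; psi_R := (q (x) id) o nabla_{R,h} *)
  (Q : {rmorphism T h -> R})
  (hQ : agrees (inlT h) (inrT h) (iota \o q) idfun Q) :
  let psiR := fun x => Q (NR h x) in
  (* (1) *)
  (forall x, psiR (iota x) = iota (psiO x)) /\
  (* (2) *)
  (forall d (Phi : {rmorphism T d -> T d}),
      agrees (inlT d) (inrT d) (inlT d \o psi d) (inrT d \o psiR) Phi ->
      forall x, NR d (psiR x) = Phi (NR d x)) /\
  (* (3) *)
  (forall (Rp : comPzRingType) (piR : {rmorphism R -> Rp})
          (iotabar : {rmorphism Op -> Rp}),
      is_quot_p piR p ->
      (forall x, iotabar (piO x) = piR (iota x)) ->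
      (* Frobenius congruence *)
      (forall d (N : {rmorphism T d -> Rp}),
          agrees (inlT d) (inrT d) (iotabar \o nu d) piR N ->
          forall x, N (NR d x) = piR (x ^+ (p ^ d)%N)) ->
      forall x, exists (n : nat) (a : 'I_n -> O) (r : 'I_n -> R),
        (forall i, rho (a i) = 0) /\
        psiR x - x ^+ (p ^ h)%N = \sum_(i < n) iota (a i) * r i).
Proof.
move=> psiR; split; last split.
- exact: (adams_iota hq_t hNR_iota hQ).
- exact: (nablaR_adams hM hNs hpsi_s hq_s hq_t hq_nab hT hNR_coassoc hNR_iota hQ).
- move=> Rp piR iotabar hpiR hiotabar hfrob.
  exact: (adams_frobenius hq_s hT hQ hchar hO hOd hpiO.1 hrhobar hnu_s hnu_res
    hpiR hiotabar (hfrob h)).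
Qed.
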